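(* Let $K$ be an algebraically closed field of characteristic zero, $\deg_1$ the standard homogeneous degree on $K[x_1,\dots,x_n]$, $\Phi=(f_1,\dots,f_n)$ a polynomial automorphism of $K^n$, and $I=\{Q : Q(\overline{f_1},\dots,\overline{f_n})=0\}$ where $\overline{f_i}$ is the homogeneous component of highest degree of $f_i$. Then $I=(0)$ if and only if $\Phi$ is affine, i.e. $\deg_1(f_i)=1$ for all $i=1,\dots,n$. *)

From mathcomp Require Import all_boot all_order all_algebra.
From mathcomp Require Export mpoly.
Set Implicit Arguments. Unset Strict Implicit. Unset Printing Implicit Defensive.
Import GRing.Theory.
Local Open Scope ring_scope.

(* standard (homogeneous) degree deg_1 : msize p = 1 + total degree (0 for p = 0) *)
Definition deg1 {n : nat} {R : ringType} (p : {mpoly R[n]}) : nat := (msize p).-1.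

Definition top_form {n : nat} {R : ringType} (p : {mpoly R[n]}) : {mpoly R[n]} :=
  pihomog mdeg (deg1 p) p.

Definition poly_automorphism {n : nat} {R : ringType} (f : n.-tuple {mpoly R[n]}) : Prop :=
  exists g : n.-tuple {mpoly R[n]},
    (forall i : 'I_n, (tnth f i) \mPo g = 'X_i) /\
    (forall i : 'I_n, (tnth g i) \mPo f = 'X_i).

Definition top_forms {n : nat} {R : ringType} (f : n.-tuple {mpoly R[n]}) :
  n.-tuple {mpoly R[n]} := [tuple top_form (tnth f i) | i < n].

Definition relation_ideal {n : nat} {R : ringType} (f : n.-tuple {mpoly R[n]}) :
  {mpoly R[n]} -> Prop := fun Q => Q \mPo top_forms f = 0.

From HB Require Import structures.
From mathcomp Require Import all_boot all_order all_algebra.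
From mathcomp Require Import mpoly zify.
Set Implicit Arguments. Unset Strict Implicit. Unset Printing Implicit Defensive.
Import GRing.Theory.
Local Open Scope ring_scope.

(* If every f_i has degree one, its top form is its linear part, and taking
   linear parts in f_i \mPo g = 'X_i shows that the top forms are inverted by
   the linear part of g; hence they satisfy no relation.
   Conversely, assume the top forms satisfy no relation. No f_j is constant,
   otherwise 'X_j - f_j would be a relation. Weight the variable x_i by
   deg f_i: the top weighted form of g_i, evaluated at the top forms, is the
   homogeneous component of g_i \mPo f = 'X_i of that weighted degree, and it
   is nonzero; so every monomial of g_i has weighted degree at most one. If
   deg f_j >= 2, no g_i involves x_j, contradicting f_j \mPo g = 'X_j. *)

Section Homog.
Variables (n : nat) (R : idomainType).
Implicit Types (p q a b : {mpoly R[n]}).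

Lemma dhomog_mmeasure_le (mf : measure n) e p :
  p \is e.-homog for mf -> (mmeasure mf p <= e.+1)%N.
Proof.
by move/dhomogP=> hp; rewrite mmeasureE; apply/bigmax_leqP_seq => m /hp ->.
Qed.

Lemma pihomog_eq0 (mf : measure n) e p :
  (mmeasure mf p <= e)%N -> pihomog mf e p = 0.
Proof.
move=> hp; rewrite pihomogE big1_seq // => m /andP[/eqP mf_m /(mmeasure_mnm_lt mf)].
by rewrite mf_m ltnNge hp.
Qed.

Lemma pihomog_mmeasure_neq0 (mf : measure n) p :
  p != 0 -> pihomog mf (mmeasure mf p).-1 p != 0.
Proof.
move=> /(mpolySpred mf); set k := (mmeasure mf p).-1 => size_p.
apply: contraTneq (leqnn (mmeasure mf p)) => top0; rewrite -ltnNge.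
have := pihomog_partitionE (eq_leq size_p).
rewrite big_ord_recr /= top0 addr0 => {1}->; rewrite size_p ltnS.
apply: (leq_trans (mmeasure_sum _ _ _ _)); apply/bigmax_leqP => i _.
exact/(leq_trans (dhomog_mmeasure_le (pihomogP _ _ _))).
Qed.

Lemma mpolyXU_neq0 (i : 'I_n) : 'X_i != 0 :> {mpoly R[n]}.
Proof. by rewrite -msize_poly_eq0 msizeX. Qed.

Lemma msizeM_leD p q : (msize (p * q) <= (msize p + msize q).-1)%N.
Proof.
have [->|nz_p] := eqVneq p 0; first by rewrite mul0r msize0.
have [->|nz_q] := eqVneq q 0; first by rewrite mulr0 msize0.
by rewrite msizeM.
Qed.

(* [a = 0] is allowed: then [p] has degree less than [D]. *)
Definition is_topform D p a := a \is D.-homog /\ (msize (p - a) <= D)%N.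

Lemma is_topform1 : is_topform 0 1 1.
Proof. by split; [exact: dhomog1 | rewrite subrr msize0]. Qed.

Lemma is_topformM D E p a q b :
  is_topform D p a -> is_topform E q b -> is_topform (D + E) (p * q) (a * b).
Proof.
move=> [hom_a lt_pa] [hom_b lt_qb]; split; first exact: dhomogM.
have le_q : (msize q <= E.+1)%N.
  rewrite -[q](subrK b); apply: (leq_trans (msizeD_le _ _)).
  by rewrite geq_max (leq_trans lt_qb) ?dhomog_mmeasure_le.
have le_a := dhomog_mmeasure_le hom_a.
have -> : p * q - a * b = (p - a) * q + a * (q - b).
  by rewrite mulrBl mulrBr addrA subrK.
apply: (leq_trans (msizeD_le _ _)); rewrite geq_max.
by rewrite !(leq_trans (msizeM_leD _ _)) //; lia.
Qed.

Lemma is_topformX D p a k : is_topform D p a -> is_topform (D * k) (p ^+ k) (a ^+ k).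
Proof.
move=> hpa; elim: k => [|k ih]; first by rewrite !expr0 muln0; exact: is_topform1.
by rewrite !exprS mulnS; apply: is_topformM.
Qed.

Lemma is_topform_prod (I : finType) (D : I -> nat) (F A : I -> {mpoly R[n]}) :
  (forall i, is_topform (D i) (F i) (A i)) ->
  is_topform (\sum_i D i) (\prod_i F i) (\prod_i A i).
Proof.
move=> hFA; apply: (big_rec3 (fun d p a => is_topform d p a)); first exact: is_topform1.
by move=> i d p a _; apply: is_topformM.
Qed.

Lemma pihomog_topform D p a : is_topform D p a -> pihomog mdeg D p = a.
Proof.
move=> [hom_a lt_pa]; rewrite -[p](subrK a) raddfD /= pihomog_eq0 //.
by rewrite add0r pihomog_dE.
Qed.

Lemma pihomog_topform_lt D E p a :
  is_topform E p a -> (E < D)%N -> pihomog mdeg D p = 0.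
Proof.
move=> [hom_a lt_pa] lt_ED; rewrite -[p](subrK a) raddfD /= pihomog_eq0.
  by rewrite add0r (pihomog_ne0 _ hom_a) // ltn_eqF.
exact: leq_trans lt_pa (ltnW lt_ED).
Qed.

Lemma is_topform_top_form p : is_topform (deg1 p) p (top_form p).
Proof.
split; first exact: pihomogP.
have le_p : (msize p <= (deg1 p).+1)%N by rewrite /deg1; case: (msize p).
rewrite /top_form {1}(pihomog_partitionE le_p) big_ord_recr /= addrK.
apply: (leq_trans (msize_sum _ _ _)); apply/bigmax_leqP => i _.
exact/(leq_trans (dhomog_mmeasure_le (pihomogP _ _ _))).
Qed.

End Homog.

Lemma comp_mpolyA (R : comRingType) n k l (p : {mpoly R[n]})
    (lq : n.-tuple {mpoly R[k]}) (lr : k.-tuple {mpoly R[l]}) :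
  (p \mPo lq) \mPo lr = p \mPo [tuple tnth lq i \mPo lr | i < n].
Proof.
elim/mpolyind: p => [|c m p _ _ IHp]; first by rewrite !comp_mpoly0.
rewrite !comp_mpolyD IHp !comp_mpolyZ !comp_mpolyX rmorph_prod.
by congr (_ *: _ + _); apply: eq_bigr => i _; rewrite rmorphXn tnth_mktuple.
Qed.

Definition mwdeg n (w : 'I_n -> nat) (m : 'X_{1..n}) : nat :=
  (\sum_(i < n) w i * m i)%N.

Lemma mwdeg0 n w : @mwdeg n w 0%MM = 0%N.
Proof. by rewrite /mwdeg big1 // => i _; rewrite mnm0E muln0. Qed.

Lemma mwdegD n w : {morph @mwdeg n w : m1 m2 / (m1 + m2)%MM >-> (m1 + m2)%N}.
Proof.
move=> m1 m2; rewrite /mwdeg -big_split /=.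
by apply: eq_bigr => i _; rewrite mnmDE mulnDr.
Qed.

HB.instance Definition _ n w :=
  isMeasure.Build n (@mwdeg n w) (@mwdeg0 n w) (@mwdegD n w).

Lemma mwdeg_ge n w (m : 'X_{1..n}) j : (w j * m j <= mwdeg w m)%N.
Proof. by rewrite /mwdeg (bigD1 j) //= leq_addr. Qed.

Section TopFormComp.
Variables (R : idomainType) (n k : nat) (w : 'I_n -> nat).
Variables (lq la : n.-tuple {mpoly R[k]}).
Hypothesis lq_top : forall i, is_topform (w i) (tnth lq i) (tnth la i).

Lemma pihomog_comp_topform (p : {mpoly R[n]}) D :
  (mmeasure (mwdeg w) p <= D.+1)%N ->
  pihomog mdeg D (p \mPo lq) = pihomog (mwdeg w) D p \mPo la.
Proof.
move=> size_p; rewrite [in RHS]pihomogE big_mkcond /=.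
rewrite (big_morph _ (comp_mpolyD la) (comp_mpoly0 la)) comp_mpolyEX.
rewrite (big_morph _ (@pihomogD _ _ mdeg D) (@pihomog0 _ _ mdeg D)); apply: eq_big_seq => m m_p.
rewrite linearZ /= comp_mpolyX.
have top_m : is_topform (mwdeg w m) (\prod_i tnth lq i ^+ m i)
                                    (\prod_i tnth la i ^+ m i).
  by apply: is_topform_prod => i; apply: is_topformX.
have le_mD : (mwdeg w m <= D)%N.
  by rewrite -ltnS (leq_trans (mmeasure_mnm_lt _ m_p)).
have [<-|ne_mD] := eqVneq (mwdeg w m) D.
  by rewrite (pihomog_topform top_m) comp_mpolyZ comp_mpolyX.
by rewrite (pihomog_topform_lt top_m) ?scaler0 ?comp_mpoly0 // ltn_neqAle ne_mD.
Qed.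

End TopFormComp.

Lemma pihomog1_comp_dhomog1 (R : comRingType) n k (p : {mpoly R[n]})
    (lq : n.-tuple {mpoly R[k]}) :
  p \is 1.-homog ->
  pihomog mdeg 1 (p \mPo lq) = p \mPo [tuple pihomog mdeg 1 (tnth lq i) | i < n].
Proof.
move=> hom_p; rewrite !comp_mpolyEX raddf_sum /=; apply: eq_big_seq => m m_p.
have /mdeg1P[i /eqP->] : mdeg m == 1%N by rewrite (dhomog_mf hom_p m_p).
by rewrite linearZ /= !comp_mpolyXU -!tnth_nth tnth_mktuple.
Qed.

Section SubstZero.
Variables (R : comRingType) (n : nat) (j : 'I_n).

Definition subst0 : n.-tuple {mpoly R[n]} :=
  [tuple if i == j then 0 else 'X_i | i < n].

Lemma comp_subst0X : 'X_j \mPo subst0 = 0.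
Proof. by rewrite comp_mpolyXU -tnth_nth tnth_mktuple eqxx. Qed.

Lemma comp_subst0_id (p : {mpoly R[n]}) :
  {in msupp p, forall m : 'X_{1..n}, m j = 0%N} -> p \mPo subst0 = p.
Proof.
move=> p_free; rewrite comp_mpolyEX [RHS]mpolyE; apply: eq_big_seq => m m_p.
congr (_ *: _); rewrite comp_mpolyX [RHS]mpolyXE_id; apply: eq_bigr => i _.
by rewrite tnth_mktuple; case: eqP => [->|//]; rewrite p_free // !expr0.
Qed.

End SubstZero.

Lemma tnth_top_forms (R : nzRingType) n (f : n.-tuple {mpoly R[n]}) i :
  tnth (top_forms f) i = top_form (tnth f i).
Proof. exact: tnth_mktuple. Qed.

Section InverseTopForms.
Variables (R : idomainType) (n : nat) (f g : n.-tuple {mpoly R[n]}).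
Hypothesis fg : forall i, tnth f i \mPo g = 'X_i.
Hypothesis gf : forall i, tnth g i \mPo f = 'X_i.

Let top_f i : is_topform (deg1 (tnth f i)) (tnth f i) (tnth (top_forms f) i).
Proof. by rewrite tnth_top_forms; apply: is_topform_top_form. Qed.

Section RelationFree.
Hypothesis relation_free : forall Q, Q \mPo top_forms f = 0 -> Q = 0.

Lemma deg1_gt0 j : (0 < deg1 (tnth f j))%N.
Proof.
rewrite lt0n; apply/eqP => deg0; have [_] := top_f j; rewrite deg0 leqn0.
rewrite msize_poly_eq0 subr_eq0 tnth_top_forms => /eqP top_eq.
have /msize1_polyC f_const : (msize (tnth f j) <= 1)%N.
  by move: deg0; rewrite /deg1; case: (msize _) => [|[]].
have /eqP : 'X_j - tnth f j = 0.
  apply: relation_free; rewrite comp_mpolyB comp_mpolyXU -tnth_nth.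
  by rewrite tnth_top_forms -top_eq {2}f_const comp_mpolyC -f_const subrr.
rewrite subr_eq0 f_const => /eqP/(congr1 (fun p => msize p)).
by rewrite msizeX /= mdeg1 msizeC; case: (_ != 0).
Qed.

Lemma mwdeg_inverse_le1 i (m : 'X_{1..n}) :
  m \in msupp (tnth g i) -> (mwdeg (fun j => deg1 (tnth f j)) m <= 1)%N.
Proof.
set w := fun j => _; move=> m_g.
have nz_g : tnth g i != 0.
  by apply: contra_eq_neq (gf i) => ->; rewrite comp_mpoly0 eq_sym mpolyXU_neq0.
have size_g := mpolySpred (mwdeg w) nz_g.
move: (mmeasure_mnm_lt (mwdeg w) m_g); rewrite size_g ltnS.
set D := (mmeasure _ _).-1 in size_g *.
have := pihomog_comp_topform top_f (eq_leq size_g).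
rewrite gf pihomogX /= mdeg1; case: eqP => [<- //|_ /esym/relation_free top0].
by move: (pihomog_mmeasure_neq0 (mwdeg w) nz_g); rewrite top0 eqxx.
Qed.

Lemma deg1_le1 j : (deg1 (tnth f j) <= 1)%N.
Proof.
rewrite leqNgt; apply/negP => deg_gt1.
(* No [g_i] involves [x_j], so [x_j := 0] fixes [g] and hence [f_j \mPo g = 'X_j]. *)
have g_free i : {in msupp (tnth g i), forall m : 'X_{1..n}, m j = 0%N}.
  move=> m /mwdeg_inverse_le1 le1; have := leq_trans (mwdeg_ge _ _ j) le1.
  by move: deg_gt1 => /=; lia.
have : 'X_j \mPo subst0 R j = 'X_j.
  rewrite -{1}fg comp_mpolyA -[RHS]fg; congr (_ \mPo _).
  by apply: eq_from_tnth => i; rewrite tnth_mktuple comp_subst0_id.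
by rewrite comp_subst0X => /eqP; rewrite eq_sym (negbTE (mpolyXU_neq0 _ _)).
Qed.

End RelationFree.

Lemma affine_top_forms_relation_free :
  (forall i, deg1 (tnth f i) = 1%N) ->
  forall Q, Q \mPo top_forms f = 0 -> Q = 0.
Proof.
move=> deg1_f.
pose g1 := [tuple pihomog mdeg 1 (tnth g i) | i < n].
have top_g1 j : tnth (top_forms f) j \mPo g1 = 'X_j.
  have [hom1 small] := top_f j; rewrite deg1_f in hom1 small.
  rewrite -pihomog1_comp_dhomog1 // -(subKr (tnth f j) (tnth _ j)).
  rewrite (msize1_polyC small) comp_mpolyB fg comp_mpolyC raddfB /=.
  by rewrite pihomog_dE ?dhomogX /= ?mdeg1 // pihomog_eq0 ?subr0 // msizeC leq_b1.
move=> Q Q0; rewrite -[Q]comp_mpoly_id.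
have -> : [tuple 'X_i | i < n] = [tuple tnth (top_forms f) i \mPo g1 | i < n].
  by apply: eq_from_tnth => i; rewrite [RHS]tnth_mktuple top_g1 tnth_mktuple.
by rewrite -comp_mpolyA Q0 comp_mpoly0.
Qed.

End InverseTopForms.

Theorem corollary4 (K : closedFieldType) (hK : [pchar K] =i pred0) (n : nat)
  (f : n.-tuple {mpoly K[n]}) (hPhi : poly_automorphism f) :
  (forall Q : {mpoly K[n]}, relation_ideal f Q <-> Q = 0) <->
  (forall i : 'I_n, deg1 (tnth f i) = 1%N).
Proof.
have [g [fg gf]] := hPhi; split=> [I0 j | deg1_f Q].
  have relation_free Q : Q \mPo top_forms f = 0 -> Q = 0 := (I0 Q).1.
  by apply/eqP; rewrite eqn_leq (deg1_le1 fg gf relation_free) (deg1_gt0 relation_free).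
split; first exact: affine_top_forms_relation_free.
by move=> ->; rewrite /relation_ideal comp_mpoly0.
Qed.
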